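(* Let $(X,d)$ be a metric space and $x_0\in X$. Let $\ell:X\to[0,+\infty)$ be defined by $\ell(x_0)=0$ and $\ell(x)=1$ for all $x\neq x_0$. Then $X$ is complete if and only if the equation $(\mathcal{G}_0)$ with data $\ell$ has a unique solution, namely $u_0(x)=d(x,x_0)$.
   Context: Global slope: $G[u](x)=\sup_{y\neq x}\frac{(u(x)-u(y))_+}{d(x,y)}$ if $u(x)<+\infty$, $G[u](x)=+\infty$ otherwise ($\alpha_+=\max\{\alpha,0\}$). Equation $(\mathcal{G}_0)$ with data $\ell$: a solution is a lower semicontinuous $u:X\to\mathbb{R}\cup\{+\infty\}$ with $\inf_X u=0$ and $G[u](x)=\ell(x)$ for all $x\in X$. *)

From Stdlib Require Import Reals.
From Coquelicot Require Import Coquelicot.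
Open Scope R_scope.

Definition is_metric {X : Type} (d : X -> X -> R) : Prop :=
  (forall x y, 0 <= d x y) /\
  (forall x y, d x y = 0 <-> x = y) /\
  (forall x y, d x y = d y x) /\
  (forall x y z, d x z <= d x y + d y z).

Definition metric_complete {X : Type} (d : X -> X -> R) : Prop :=
  forall s : nat -> X,
    (forall eps, 0 < eps -> exists N : nat, forall m n, (N <= m)%nat -> (N <= n)%nat ->
        d (s m) (s n) < eps) ->
    exists x, forall eps, 0 < eps -> exists N : nat, forall n, (N <= n)%nat -> d (s n) x < eps.

Definition lsc {X : Type} (d : X -> X -> R) (u : X -> Rbar) : Prop :=
  forall x (c : R), Rbar_lt c (u x) ->
    exists delta, 0 < delta /\ forall y, d x y < delta -> Rbar_lt c (u y).

(* The quotient (u(x)-u(y))_+ / d(x,y), for u(x) finite = a; if u(y)=+oo the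
   positive part is 0. *)
Definition slope_term {X : Type} (d : X -> X -> R) (u : X -> Rbar) (a : R) (x y : X) : R :=
  match u y with
  | Finite b => Rmax (a - b) 0 / d x y
  | _ => 0
  end.

(* Global slope G[u](x) = sup_{y<>x} (u(x)-u(y))_+/d(x,y) if u(x) < +oo, +oo otherwise.
   The value 0 is added to the set (all terms are >= 0) so that the supremum over an
   empty index set is 0. *)
Definition global_slope {X : Type} (d : X -> X -> R) (u : X -> Rbar) (x : X) : Rbar :=
  match u x with
  | Finite a => Lub_Rbar (fun r => r = 0 \/ exists y, y <> x /\ r = slope_term d u a x y)
  | _ => p_infty
  end.

Definition inf_X {X : Type} (u : X -> Rbar) : Rbar :=
  Glb_Rbar (fun r => exists x, u x = Finite r).

Definition is_solution_G0 {X : Type} (d : X -> X -> R) (l : X -> R) (u : X -> Rbar) : Prop :=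
  (forall x, u x <> m_infty) /\
  lsc d u /\
  inf_X u = Finite 0 /\
  (forall x, global_slope d u x = Finite (l x)).

From Stdlib Require Import Reals Lra Lia Classical IndefiniteDescription FunctionalExtensionality.
From Coquelicot Require Import Coquelicot.
Open Scope R_scope.

(* If X is complete, a solution u of (G_0) is finite, minimal with value 0 at x0 (where its
   slope vanishes) and 1-Lipschitz (its slope is 1 elsewhere), hence u <= d(., x0); a strict
   inequality u(x) < d(x, x0) is ruled out by Ekeland's variational principle.  If X is not
   complete, a Cauchy sequence (s_n) without limit gives f(x) = lim d(x, s_n), a positive
   1-Lipschitz function that, from any x, drops to almost 0 within distance barely more than
   f(x).  This keeps the slope of min(d(., x0), f) equal to 1 off x0, so it is a second
   solution, different from d(., x0) near the missing limit. *)

Definition cauchy_seq {X : Type} (d : X -> X -> R) (s : nat -> X) : Prop :=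
  forall eps, 0 < eps -> exists N : nat, forall m n, (N <= m)%nat -> (N <= n)%nat ->
    d (s m) (s n) < eps.

Definition seq_limit {X : Type} (d : X -> X -> R) (s : nat -> X) (x : X) : Prop :=
  forall eps, 0 < eps -> exists N : nat, forall n, (N <= n)%nat -> d (s n) x < eps.

Lemma exists_half_pow_lt (eps : R) : 0 < eps -> exists N, (1/2) ^ N < eps.
Proof.
  intros Heps. destruct (pow_lt_1_zero (1/2)) with eps as [N HN]; auto.
  - rewrite Rabs_right; lra.
  - exists N. specialize (HN N (le_n N)).
    rewrite Rabs_right in HN; auto. apply Rle_ge, pow_le. lra.
Qed.

Section Metric.
Context {X : Type} {d : X -> X -> R} (Hd : is_metric d).

Lemma dist_ge0 x y : 0 <= d x y.
Proof. apply Hd. Qed.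

Lemma dist_eq0 x y : d x y = 0 -> x = y.
Proof. apply Hd. Qed.

Lemma dist_xx x : d x x = 0.
Proof. apply Hd. reflexivity. Qed.

Lemma dist_sym x y : d x y = d y x.
Proof. apply Hd. Qed.

Lemma dist_triangle x y z : d x z <= d x y + d y z.
Proof. apply Hd. Qed.

Lemma dist_gt0 x y : x <> y -> 0 < d x y.
Proof.
  intros Hxy. destruct (Rle_lt_or_eq_dec _ _ (dist_ge0 x y)) as [Hlt | Heq]; auto.
  exfalso. apply Hxy, dist_eq0. auto.
Qed.

End Metric.

Section GlobalSlope.
Context {X : Type} (d : X -> X -> R) (v : X -> R) (x : X).
Hypothesis Hd : is_metric d.

Lemma global_slope_Finite :
  global_slope d (fun y => Finite (v y)) x =
  Lub_Rbar (fun r => r = 0 \/ exists y, y <> x /\ r = Rmax (v x - v y) 0 / d x y).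
Proof. reflexivity. Qed.

Lemma global_slope_ge0 : Rbar_le 0 (global_slope d (fun y => Finite (v y)) x).
Proof. rewrite global_slope_Finite. apply Lub_Rbar_correct. now left. Qed.

Lemma global_slope_le (c : R) :
  0 <= c -> (forall y, y <> x -> v x - v y <= c * d x y) ->
  Rbar_le (global_slope d (fun y => Finite (v y)) x) c.
Proof.
  intros Hc Hbound. rewrite global_slope_Finite. apply Lub_Rbar_correct.
  intros r [-> | [y [Hy ->]]]; simpl; auto.
  apply Rle_div_l; [apply (dist_gt0 Hd); auto|].
  apply Rmax_lub; auto. apply Rmult_le_pos; auto. apply (dist_ge0 Hd).
Qed.

Lemma global_slope_ge (c : R) :
  (forall th, 0 < th -> exists y, y <> x /\ (c - th) * d x y < v x - v y) ->
  Rbar_le c (global_slope d (fun y => Finite (v y)) x).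
Proof.
  intros Happrox. rewrite global_slope_Finite.
  destruct (Lub_Rbar_correct
    (fun r => r = 0 \/ exists y, y <> x /\ r = Rmax (v x - v y) 0 / d x y)) as [Hub _].
  destruct Lub_Rbar as [g | |]; simpl; auto.
  - apply Rle_plus_epsilon. intros th Hth.
    destruct (Happrox th Hth) as [y [Hy Hlt]].
    specialize (Hub _ (or_intror (ex_intro _ y (conj Hy eq_refl)))). simpl in Hub.
    assert (c - th < Rmax (v x - v y) 0 / d x y).
    { apply Rlt_div_r; [apply (dist_gt0 Hd); auto|].
      pose proof (Rmax_l (v x - v y) 0). lra. }
    lra.
  - exact (Hub 0 (or_introl eq_refl)).
Qed.

Lemma global_slope_bound (c : R) :
  global_slope d (fun y => Finite (v y)) x = Finite c ->
  forall y, y <> x -> v x - v y <= c * d x y.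
Proof.
  intros Hc y Hy.
  destruct (Lub_Rbar_correct
    (fun r => r = 0 \/ exists y, y <> x /\ r = Rmax (v x - v y) 0 / d x y)) as [Hub _].
  rewrite <- global_slope_Finite, Hc in Hub.
  specialize (Hub _ (or_intror (ex_intro _ y (conj Hy eq_refl)))). simpl in Hub.
  apply Rle_div_l in Hub; [|apply (dist_gt0 Hd); auto].
  pose proof (Rmax_l (v x - v y) 0). lra.
Qed.

End GlobalSlope.

Lemma lsc_of_lipschitz {X : Type} (d : X -> X -> R) (v : X -> R) :
  (forall x y, v x - v y <= d x y) -> lsc d (fun x => Finite (v x)).
Proof.
  intros Hlip x c Hc. simpl in Hc. exists (v x - c). split; [lra|].
  intros y Hy. simpl. specialize (Hlip x y). lra.
Qed.

Lemma inf_X_attained {X : Type} (v : X -> R) (x0 : X) :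
  (forall y, v x0 <= v y) -> inf_X (fun x => Finite (v x)) = Finite (v x0).
Proof.
  intros Hmin. apply is_glb_Rbar_unique. split.
  - intros r [y Hy]. injection Hy as <-. apply Hmin.
  - intros b Hb. apply Hb. exists x0. reflexivity.
Qed.

Section SlopeOneSolution.
Context {X : Type} (d : X -> X -> R) (x0 : X) (l : X -> R).
Hypotheses (Hd : is_metric d) (Hl0 : l x0 = 0) (Hl1 : forall x, x <> x0 -> l x = 1).

Lemma solution_of_slope_one (v : X -> R) :
  (forall x, 0 <= v x) -> v x0 = 0 -> (forall x y, v x - v y <= d x y) ->
  (forall x, x <> x0 -> forall th, 0 < th ->
     exists y, y <> x /\ (1 - th) * d x y < v x - v y) ->
  is_solution_G0 d l (fun x => Finite (v x)).
Proof.
  intros Hge0 Hv0 Hlip Happrox.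
  split; [discriminate|]. split; [now apply lsc_of_lipschitz|].
  split; [rewrite (inf_X_attained v x0), Hv0; auto; intros y; rewrite Hv0; auto|].
  intros x. destruct (classic (x = x0)) as [-> | Hx].
  - rewrite Hl0. apply Rbar_le_antisym; [|apply global_slope_ge0].
    apply global_slope_le; auto; [lra|].
    intros y _. rewrite Hv0, Rmult_0_l. specialize (Hge0 y). lra.
  - rewrite (Hl1 x Hx). apply Rbar_le_antisym.
    + apply global_slope_le; auto; [lra|]. intros y _. rewrite Rmult_1_l. auto.
    + apply global_slope_ge; auto.
Qed.

Lemma dist_solution : is_solution_G0 d l (fun x => Finite (d x x0)).
Proof.
  apply solution_of_slope_one.
  - intros x. apply (dist_ge0 Hd).
  - apply (dist_xx Hd).
  - intros x y. pose proof (dist_triangle Hd x y x0). lra.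
  - intros x Hx th Hth. exists x0. split; auto.
    rewrite (dist_xx Hd). pose proof (dist_gt0 Hd x x0 Hx). nra.
Qed.

End SlopeOneSolution.

Section Ekeland.
Context {X : Type} (d : X -> X -> R) (v : X -> R) (m e : R).
Hypotheses (Hd : is_metric d) (Hlsc : lsc d (fun x => Finite (v x)))
  (Hm : forall x, m <= v x) (He : 0 < e).

Definition ekeland_below (a b : X) : Prop := v b + e * d b a <= v a.

Lemma ekeland_below_refl a : ekeland_below a a.
Proof. unfold ekeland_below. rewrite (dist_xx Hd). lra. Qed.

Lemma ekeland_below_trans a b c :
  ekeland_below a b -> ekeland_below b c -> ekeland_below a c.
Proof.
  unfold ekeland_below. intros Hab Hbc.
  assert (e * d c a <= e * d c b + e * d b a).
  { rewrite <- Rmult_plus_distr_l. apply Rmult_le_compat_l; [lra|]. apply (dist_triangle Hd). }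
  lra.
Qed.

Lemma ekeland_below_near_inf a (delta : R) : 0 < delta ->
  exists b, ekeland_below a b /\ forall w, ekeland_below a w -> v b <= v w + delta.
Proof.
  intros Hdelta.
  set (E := fun r => exists w, ekeland_below a w /\ r = v w).
  destruct (Glb_Rbar_correct E) as [Hlb Hglb].
  assert (Hm_le : Rbar_le m (Glb_Rbar E)).
  { apply Hglb. intros r [w [_ ->]]. apply Hm. }
  assert (Hle_a : Rbar_le (Glb_Rbar E) (v a)).
  { apply Hlb. exists a. split; [apply ekeland_below_refl | reflexivity]. }
  destruct (Glb_Rbar E) as [g | |]; simpl in Hm_le, Hle_a; try contradiction.
  assert (Hnot_lb : ~ is_lb_Rbar E (g + delta)).
  { intros H. specialize (Hglb _ H). simpl in Hglb. lra. }
  apply not_all_ex_not in Hnot_lb as [r Hr].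
  apply imply_to_and in Hr as [[b [Hb ->]] Hr]. simpl in Hr.
  exists b. split; auto.
  intros w Hw. specialize (Hlb (v w) (ex_intro _ w (conj Hw eq_refl))). simpl in Hlb. lra.
Qed.

Lemma ekeland_chain_exists z0 : exists z : nat -> X, z O = z0 /\ forall n,
  ekeland_below (z n) (z (S n)) /\
  forall w, ekeland_below (z n) w -> v (z (S n)) <= v w + e * (1/2) ^ n.
Proof.
  destruct (functional_choice (fun (p : nat * X) b => ekeland_below (snd p) b /\
      forall w, ekeland_below (snd p) w -> v b <= v w + e * (1/2) ^ (fst p))) as [F HF].
  { intros [n a]. apply ekeland_below_near_inf.
    apply Rmult_lt_0_compat; auto. apply pow_lt. lra. }
  exists (fix z n := match n with O => z0 | S k => F (k, z k) end).
  split; [reflexivity|]. intros n. exact (HF (n, _)).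
Qed.

Section Chain.
Variable z : nat -> X.
Hypothesis Hstep : forall n, ekeland_below (z n) (z (S n)).
Hypothesis Hnear : forall n w, ekeland_below (z n) w -> v (z (S n)) <= v w + e * (1/2) ^ n.

Lemma chain_below n p : (n <= p)%nat -> ekeland_below (z n) (z p).
Proof.
  intros Hnp. replace p with ((p - n) + n)%nat by lia.
  induction (p - n)%nat as [|k IH]; [apply ekeland_below_refl|].
  exact (ekeland_below_trans _ _ _ IH (Hstep _)).
Qed.

Lemma chain_below_close n w : ekeland_below (z (S n)) w -> d w (z (S n)) <= (1/2) ^ n.
Proof.
  intros Hw.
  pose proof (Hnear n w (ekeland_below_trans _ _ _ (Hstep n) Hw)) as Hinf.
  unfold ekeland_below in Hw.
  apply Rmult_le_reg_l with e; auto. lra.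
Qed.

Lemma chain_cauchy : cauchy_seq d z.
Proof.
  intros eps Heps. destruct (exists_half_pow_lt (eps / 2)) as [N HN]; [lra|].
  exists (S N). intros p q Hp Hq.
  pose proof (chain_below_close N _ (chain_below _ _ Hp)).
  pose proof (chain_below_close N _ (chain_below _ _ Hq)).
  pose proof (dist_triangle Hd (z p) (z (S N)) (z q)).
  rewrite (dist_sym Hd (z (S N)) (z q)) in *. lra.
Qed.

Lemma chain_limit_below zl : seq_limit d z zl -> forall n, ekeland_below (z n) zl.
Proof.
  intros Hlim n. unfold ekeland_below. apply Rnot_lt_le. intros Hgap.
  set (g := v zl + e * d zl (z n) - v (z n)).
  assert (Hg : 0 < g) by (unfold g; lra).
  destruct (Hlsc zl (v zl - g / 2)) as [delta [Hdelta Hball]]; [simpl; lra|].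
  destruct (Hlim delta Hdelta) as [N1 HN1].
  destruct (Hlim (g / (2 * e))) as [N2 HN2].
  { apply Rdiv_lt_0_compat; lra. }
  set (p := (N1 + N2 + n)%nat).
  assert (Hvp : v zl - g / 2 < v (z p)).
  { apply (Hball (z p)). rewrite (dist_sym Hd). apply HN1. unfold p. lia. }
  assert (Hclose : e * d (z p) zl < g / 2).
  { assert (d (z p) zl < g / (2 * e)) by (apply HN2; unfold p; lia).
    apply Rlt_div_r in H; [|lra]. lra. }
  pose proof (chain_below n p ltac:(unfold p; lia)) as Hbelow. unfold ekeland_below in Hbelow.
  assert (e * d zl (z n) <= e * d (z p) zl + e * d (z p) (z n)).
  { rewrite <- Rmult_plus_distr_l, (dist_sym Hd (z p) zl).
    apply Rmult_le_compat_l; [lra|]. apply (dist_triangle Hd). }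
  unfold g in *. lra.
Qed.

End Chain.

Theorem ekeland_principle : metric_complete d -> forall z0,
  exists z, ekeland_below z0 z /\ forall y, ekeland_below z y -> y = z.
Proof.
  intros Hcomplete z0.
  destruct (ekeland_chain_exists z0) as [z [Hz0 Hz]].
  assert (Hstep : forall n, ekeland_below (z n) (z (S n))) by apply Hz.
  assert (Hnear : forall n w, ekeland_below (z n) w -> v (z (S n)) <= v w + e * (1/2) ^ n)
    by apply Hz.
  destruct (Hcomplete z (chain_cauchy z Hstep Hnear)) as [zl Hlim].
  pose proof (chain_limit_below z Hstep zl Hlim) as Hzl.
  exists zl. split; [rewrite <- Hz0; apply Hzl|].
  intros y Hy. apply (dist_eq0 Hd). apply Rle_antisym; [|apply (dist_ge0 Hd)].
  apply Rle_plus_epsilon. intros eps Heps.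
  destruct (exists_half_pow_lt (eps / 2)) as [N HN]; [lra|].
  pose proof (chain_below_close z Hstep Hnear N zl (Hzl (S N))).
  pose proof (chain_below_close z Hstep Hnear N y (ekeland_below_trans _ _ _ (Hzl (S N)) Hy)).
  pose proof (dist_triangle Hd y (z (S N)) zl).
  rewrite (dist_sym Hd (z (S N)) zl) in *. lra.
Qed.

End Ekeland.

Section SolutionUnique.
Context {X : Type} (d : X -> X -> R) (x0 : X) (l : X -> R).
Hypotheses (Hd : is_metric d) (Hl0 : l x0 = 0) (Hl1 : forall x, x <> x0 -> l x = 1).

Lemma solution_finite (u : X -> Rbar) :
  is_solution_G0 d l u -> u = fun x => Finite (real (u x)).
Proof.
  intros [_ [_ [_ Hslope]]]. apply functional_extensionality. intros x.
  specialize (Hslope x). unfold global_slope in Hslope.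
  destruct (u x); simpl; auto; discriminate.
Qed.

Section RealSolution.
Variable v : X -> R.
Hypothesis Hsol : is_solution_G0 d l (fun x => Finite (v x)).

Lemma solution_min_x0 y : v x0 <= v y.
Proof.
  destruct (classic (y = x0)) as [-> | Hy]; [lra|].
  destruct Hsol as [_ [_ [_ Hslope]]]. specialize (Hslope x0). rewrite Hl0 in Hslope.
  pose proof (global_slope_bound d v x0 Hd 0 Hslope y Hy). lra.
Qed.

Lemma solution_x0 : v x0 = 0.
Proof.
  destruct Hsol as [_ [_ [Hinf _]]].
  rewrite (inf_X_attained v x0 solution_min_x0) in Hinf. injection Hinf. auto.
Qed.

Lemma solution_lipschitz x y : v x - v y <= d x y.
Proof.
  pose proof (dist_ge0 Hd x y).
  destruct (classic (x = x0)) as [-> | Hx]; [pose proof (solution_min_x0 y); lra|].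
  destruct (classic (y = x)) as [-> | Hy]; [lra|].
  destruct Hsol as [_ [_ [_ Hslope]]]. specialize (Hslope x). rewrite (Hl1 x Hx) in Hslope.
  pose proof (global_slope_bound d v x Hd 1 Hslope y Hy). lra.
Qed.

(* If [v x < d x x0], Ekeland's principle with a slope [e < 1] started at [x] yields a
   point [z] at which every slope of [v] is at most [e], so [z] can only be [x0]; but
   [z] lies [e]-below [x], which [v x0 = 0] forbids. *)
Lemma solution_ge_dist : metric_complete d -> forall x, d x x0 <= v x.
Proof.
  intros Hcomplete x. apply Rnot_lt_le. intros Hlt.
  assert (Hx : x <> x0) by (intros ->; rewrite (dist_xx Hd), solution_x0 in Hlt; lra).
  set (D := d x x0) in *.
  assert (HD : 0 < D) by (apply (dist_gt0 Hd); auto).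
  assert (Hv0 : forall y, 0 <= v y) by (intros y; rewrite <- solution_x0; apply solution_min_x0).
  set (e := (v x + D) / (2 * D)).
  assert (He : 0 < e) by (unfold e; apply Rdiv_lt_0_compat; [pose proof (Hv0 x)|]; lra).
  assert (He1 : e < 1) by (unfold e; apply Rlt_div_l; lra).
  assert (HeD : v x < e * D) by (unfold e; field_simplify; lra).
  destruct (ekeland_principle d v 0 e Hd (proj1 (proj2 Hsol)) Hv0 He Hcomplete x)
    as [z [Hzx Hzmin]].
  destruct (classic (z = x0)) as [-> | Hz].
  - unfold ekeland_below in Hzx. rewrite solution_x0, (dist_sym Hd) in Hzx. fold D in Hzx. lra.
  - destruct Hsol as [_ [_ [_ Hslope]]]. specialize (Hslope z). rewrite (Hl1 z Hz) in Hslope.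
    assert (Hle : Rbar_le (Finite 1) (Finite e)).
    { rewrite <- Hslope. apply global_slope_le; auto; [lra|].
      intros y Hy. apply Rnot_lt_le. intros Hgt. apply Hy, Hzmin.
      unfold ekeland_below. rewrite (dist_sym Hd). lra. }
    simpl in Hle. lra.
Qed.

End RealSolution.

Lemma solution_unique_of_complete : metric_complete d ->
  forall u, is_solution_G0 d l u -> forall x, u x = Finite (d x x0).
Proof.
  intros Hcomplete u Hu x.
  set (v := fun y => real (u y)).
  assert (Hv : is_solution_G0 d l (fun y => Finite (v y))) by (unfold v; rewrite <- (solution_finite u Hu); exact Hu).
  rewrite (solution_finite u Hu). f_equal. change (v x = d x x0).
  apply Rle_antisym.
  - pose proof (solution_lipschitz v Hv x x0). rewrite (solution_x0 v Hv) in H. lra.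
  - exact (solution_ge_dist v Hv Hcomplete x).
Qed.

End SolutionUnique.

Section DistanceToCauchySequence.
Context {X : Type} (d : X -> X -> R) (s : nat -> X).
Hypotheses (Hd : is_metric d) (Hs : cauchy_seq d s).

Lemma dist_to_cauchy_cv : exists f : X -> R, forall x, Un_cv (fun n => d x (s n)) (f x).
Proof.
  assert (Hcrit : forall x, Cauchy_crit (fun n => d x (s n))).
  { intros x eps Heps. destruct (Hs eps Heps) as [N HN]. exists N.
    intros p q Hp Hq. unfold Rdist. specialize (HN p q Hp Hq).
    pose proof (dist_triangle Hd x (s q) (s p)). pose proof (dist_triangle Hd x (s p) (s q)).
    rewrite (dist_sym Hd (s q) (s p)) in *. apply Rabs_def1; lra. }
  exists (fun x => proj1_sig (Rcomplete.R_complete _ (Hcrit x))).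
  intros x. exact (proj2_sig (Rcomplete.R_complete _ (Hcrit x))).
Qed.

Variable f : X -> R.
Hypothesis Hf : forall x, Un_cv (fun n => d x (s n)) (f x).

Lemma limdist_near x eps : 0 < eps ->
  exists N, forall n, (N <= n)%nat -> f x - eps < d x (s n) < f x + eps.
Proof.
  intros Heps. destruct (Hf x eps Heps) as [N HN]. exists N.
  intros n Hn. specialize (HN n Hn). unfold Rdist in HN. apply Rabs_def2 in HN. lra.
Qed.

Lemma limdist_lipschitz x y : f x - f y <= d x y.
Proof.
  apply Rle_plus_epsilon. intros eps Heps.
  destruct (limdist_near x (eps / 2)) as [N1 H1]; [lra|].
  destruct (limdist_near y (eps / 2)) as [N2 H2]; [lra|].
  specialize (H1 (N1 + N2)%nat ltac:(lia)). specialize (H2 (N1 + N2)%nat ltac:(lia)).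
  pose proof (dist_triangle Hd x y (s (N1 + N2)%nat)). lra.
Qed.

Lemma limdist_gt0_of_no_limit : ~ (exists x, seq_limit d s x) -> forall x, 0 < f x.
Proof.
  intros Hnolim x. apply Rnot_le_lt. intros Hle. apply Hnolim. exists x.
  intros eps Heps. destruct (limdist_near x eps Heps) as [N HN]. exists N.
  intros n Hn. rewrite (dist_sym Hd). specialize (HN n Hn). lra.
Qed.

Lemma limdist_inf_approx x eta : 0 < eta -> exists y, f y < eta /\ d x y < f x + eta.
Proof.
  intros Heta.
  destruct (Hs (eta / 2)) as [Nc HNc]; [lra|].
  destruct (limdist_near x eta Heta) as [Nx HNx].
  exists (s (Nc + Nx)%nat). split.
  - destruct (limdist_near (s (Nc + Nx)%nat) (eta / 2)) as [M HM]; [lra|].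
    specialize (HM (M + Nc)%nat ltac:(lia)).
    specialize (HNc (Nc + Nx)%nat (M + Nc)%nat ltac:(lia) ltac:(lia)). lra.
  - apply HNx. lia.
Qed.

End DistanceToCauchySequence.

Section SecondSolution.
Context {X : Type} (d : X -> X -> R) (x0 : X) (l : X -> R) (f : X -> R).
Hypotheses (Hd : is_metric d) (Hl0 : l x0 = 0) (Hl1 : forall x, x <> x0 -> l x = 1)
  (Hf_gt0 : forall x, 0 < f x) (Hf_lip : forall x y, f x - f y <= d x y)
  (Hf_approx : forall x eta, 0 < eta -> exists y, f y < eta /\ d x y < f x + eta).

Lemma min_dist_solution : is_solution_G0 d l (fun x => Finite (Rmin (d x x0) (f x))).
Proof.
  assert (Hv0 : Rmin (d x0 x0) (f x0) = 0).
  { rewrite (dist_xx Hd). apply Rmin_left. left; auto. }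
  apply (solution_of_slope_one d x0 l); auto.
  - intros x. apply Rmin_glb; [apply (dist_ge0 Hd) | left; auto].
  - intros x y. pose proof (dist_triangle Hd x y x0). pose proof (Hf_lip x y).
    unfold Rmin. destruct (Rle_dec (d x x0) (f x)); destruct (Rle_dec (d y x0) (f y)); lra.
  - intros x Hx th Hth. pose proof (dist_gt0 Hd x x0 Hx).
    destruct (Rle_dec (d x x0) (f x)) as [Hle | Hgt].
    + exists x0. split; auto. rewrite Hv0, (Rmin_left _ _ Hle). nra.
    + rewrite (Rmin_right (d x x0) (f x)) by lra.
      pose proof (Hf_gt0 x).
      set (eta := Rmin (f x / 2) (th * f x / 4)).
      assert (Heta_half : eta <= f x / 2) by apply Rmin_l.
      assert (Heta_th : eta <= th * f x / 4) by apply Rmin_r.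
      assert (Heta : 0 < eta) by (apply Rmin_glb_lt; nra).
      destruct (Hf_approx x eta Heta) as [y [Hy Hxy]].
      exists y. split; [intros ->; lra|].
      pose proof (Rmin_r (d y x0) (f y)). pose proof (dist_ge0 Hd x y).
      destruct (Rle_dec th 1).
      * assert ((1 - th) * d x y <= (1 - th) * (f x + eta))
          by (apply Rmult_le_compat_l; lra).
        nra.
      * nra.
Qed.

Lemma min_dist_differs : exists y, Rmin (d y x0) (f y) <> d y x0.
Proof.
  destruct (Hf_approx x0 (f x0 / 4)) as [y [Hy _]]; [pose proof (Hf_gt0 x0); lra|].
  exists y. pose proof (Hf_lip x0 y) as Hlip. pose proof (Hf_gt0 x0).
  rewrite (dist_sym Hd) in Hlip. rewrite Rmin_right; lra.
Qed.

End SecondSolution.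

Theorem corollary3p12 (X : Type) (d : X -> X -> R) (x0 : X) (l : X -> R) :
  is_metric d ->
  l x0 = 0 ->
  (forall x, x <> x0 -> l x = 1) ->
  (metric_complete d <->
   (is_solution_G0 d l (fun x => Finite (d x x0)) /\
    forall u, is_solution_G0 d l u -> forall x, u x = Finite (d x x0))).
Proof.
  intros Hd Hl0 Hl1. split.
  - intros Hcomplete. split; [exact (dist_solution d x0 l Hd Hl0 Hl1)|].
    exact (solution_unique_of_complete d x0 l Hd Hl0 Hl1 Hcomplete).
  - intros [_ Hunique] s Hs. apply NNPP. intros Hnolim.
    destruct (dist_to_cauchy_cv d s Hd Hs) as [f Hf].
    pose proof (limdist_gt0_of_no_limit d s Hd f Hf Hnolim) as Hf_gt0.
    pose proof (limdist_lipschitz d s Hd f Hf) as Hf_lip.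
    pose proof (limdist_inf_approx d s Hs f Hf) as Hf_approx.
    destruct (min_dist_differs d x0 f Hd Hf_gt0 Hf_lip Hf_approx) as [y Hy].
    apply Hy.
    pose proof (Hunique _ (min_dist_solution d x0 l f Hd Hl0 Hl1 Hf_gt0 Hf_lip Hf_approx) y)
      as Heq.
    injection Heq. auto.
Qed.
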